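(* Let $U,V\in\mathbb{R}_{\max}^{m\times n}$, $b,d\in\mathbb{R}_{\max}^m$, $p\in\mathbb{R}_{\max}^n$, $q\in(\mathbb{R}\cup\{+\infty\})^n$, with $A$, $B(\lambda)$, $\Phi$, strategies and game graph as in the context. Then Problem (P) is unbounded, i.e. $\Phi(\lambda)\geq 0$ for all $\lambda\in\mathbb{R}$, if and only if there exists a positional strategy $\sigma$ of Max such that every cycle of the game graph defined by $A$ and $B^{\sigma}(0)$ contains only nodes of Max from the group $[m]$ and has nonnegative weight.
   Context: Max-plus notation: $\mathbb{R}_{\max}=\mathbb{R}\cup\{-\infty\}$, $a\oplus b=\max(a,b)$, $a\otimes b=a+b$, extended to matrices as usual. $I$ is the max-plus identity (0 on the diagonal, $-\infty$ elsewhere). The conjugate $a^-$ is $-a$ for real $a$, $+\infty$ for $a=-\infty$, $-\infty$ for $a=+\infty$; $q^-$ is the row vector $(q_i^-)$. Problem (P): minimize $x^-\otimes p\oplus q^-\otimes x$ over $x\in\mathbb{R}^n$ subject to $U\otimes x\oplus b\le V\otimes x\oplus d$. Set $$A=\begin{pmatrix} U & b\\ -\infty & p\\ q^- & -\infty\end{pmatrix},\qquad B(\lambda)=\begin{pmatrix} V & d\\ \lambda\otimes I & -\infty\\ -\infty & \lambda\end{pmatrix}$$ ($(m+n+1)\times(n+1)$ matrices; middle block row of $A$ is $(-\infty_{n\times n},p)$, last row $(q^-,-\infty)$; $\lambda\otimes I$ has $\lambda$ on the diagonal, $-\infty$ elsewhere; last row of $B(\lambda)$ is $(-\infty,\dots,-\infty,\lambda)$).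 Game graph defined by $(m+n+1)\times(n+1)$ matrices $A',B'$: nodes of Max are rows $1,\dots,m+n+1$, the first $m$ rows forming the group $[m]$; nodes of Min are columns $1,\dots,n+1$; arc Max $i\to$ Min $l$ of weight $b'_{il}$ when $b'_{il}\ne-\infty$; arc Min $j\to$ Max $i$ of weight $-a'_{ij}$ when $a'_{ij}\ne-\infty$; cycle weight is the sum of arc weights. A positional strategy of Max is a map $\sigma:\{1,\dots,m+n+1\}\to\{1,\dots,n+1\}$ with $B(\lambda)_{i\sigma(i)}\ne-\infty$ for all $i$; $B^\sigma(\lambda)$ keeps the entries $B(\lambda)_{i\sigma(i)}$ and sets all others to $-\infty$. For matrices $A',B'$, $A'^\sharp B'$ denotes the map $f_j(x)=\min_{k:a'_{kj}\ne-\infty}(-a'_{kj}+\max_{l:b'_{kl}\ne-\infty}(b'_{kl}+x_l))$, with cycle-time vector $\chi=\lim_k f^k(0)/k$; $\Phi(\lambda)=\min_i\chi_i(A^\sharp B(\lambda))$. (Standing assumption: every column of $A$ and every row of $B(\lambda)$ has a finite entry.) The condition $\Phi(\lambda)\ge 0$ expresses that (P) has a feasible $x\in\mathbb{R}^n$ with objective value at most $\lambda$. *)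

(* Max-plus scalars are extended reals
   \bar R (with hypotheses excluding +oo / -oo where the paper does). *)
From HB Require Import structures.
From mathcomp Require Import all_boot all_order all_algebra.
From mathcomp Require Import all_classical all_reals all_analysis.
Set Implicit Arguments. Unset Strict Implicit. Unset Printing Implicit Defensive.
Import Order.TTheory GRing.Theory Num.Theory numFieldNormedType.Exports.
Local Open Scope ring_scope.
Local Open Scope ereal_scope.

Section MaxPlus.
Variable R : realType.

Definition mpscal (k : nat) (lam : \bar R) : 'M[\bar R]_k :=
  \matrix_(i, j) if i == j then lam else -oo.

(* conjugate of a row vector: a^- = -a, (-oo)^- = +oo, (+oo)^- = -oo *)
Definition conjv (n : nat) (q : 'rV[\bar R]_n) : 'rV[\bar R]_n :=
  \row_j (- q ord0 j).

Definition matA (m n : nat) (U : 'M[\bar R]_(m, n)) (b : 'cV[\bar R]_m)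
  (p : 'cV[\bar R]_n) (q : 'rV[\bar R]_n) : 'M[\bar R]_(m + n + 1, n + 1) :=
  col_mx (col_mx (row_mx U b) (row_mx (const_mx -oo) p))
         (row_mx (conjv q) (const_mx -oo)).

Definition matB (m n : nat) (V : 'M[\bar R]_(m, n)) (d : 'cV[\bar R]_m)
  (lam : R) : 'M[\bar R]_(m + n + 1, n + 1) :=
  col_mx (col_mx (row_mx V d) (row_mx (mpscal n lam%:E) (const_mx -oo)))
         (row_mx (const_mx -oo) (const_mx lam%:E)).

Definition sharp (r c : nat) (A B : 'M[\bar R]_(r, c)) (x : 'I_c -> R) : 'I_c -> R :=
  fun j => fine (\big[Order.min/+oo]_(k < r | A k j \is a fin_num)
                  (- A k j + \big[Order.max/-oo]_(l < c | B k l \is a fin_num)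
                                (B k l + (x l)%:E))).

Definition cycle_time (r c : nat) (A B : 'M[\bar R]_(r, c)) (j : 'I_c) : R :=
  limn (fun k : nat => (iter k (sharp A B) (fun _ => 0%R) j / k%:R)%R).

(* Phi = min_j chi_j(A^# B) (taken in \bar R to have a neutral element) *)
Definition Phi (r c : nat) (A B : 'M[\bar R]_(r, c)) : \bar R :=
  \big[Order.min/+oo]_(j < c) (cycle_time A B j)%:E.

Definition is_strategy (r c : nat) (B : 'M[\bar R]_(r, c)) (sigma : 'I_r -> 'I_c) :=
  forall i, B i (sigma i) != -oo.

Definition strat_restrict (r c : nat) (B : 'M[\bar R]_(r, c)) (sigma : 'I_r -> 'I_c)
  : 'M[\bar R]_(r, c) :=
  \matrix_(i, j) if j == sigma i then B i j else -oo.

(* A cycle of the game graph of (A', B') is encoded by the nonempty sequence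
   s = [(i_0, j_0); ...; (i_{t-1}, j_{t-1})] of alternating Max nodes i_k
   (rows) and Min nodes j_k (columns), with arcs i_k -> j_k (b'_{i_k j_k}
   finite) and j_k -> i_{k+1 mod t} (a'_{i_{k+1} j_k} finite). *)
Definition game_cycle (r c : nat) (A B : 'M[\bar R]_(r, c))
  (s : seq ('I_r * 'I_c)) : bool :=
  (s != [::]) &&
  all (fun xy : ('I_r * 'I_c) * ('I_r * 'I_c) =>
         (B xy.1.1 xy.1.2 \is a fin_num) && (A xy.2.1 xy.1.2 \is a fin_num))
      (zip s (rot 1 s)).

Definition cycle_weight (r c : nat) (A B : 'M[\bar R]_(r, c))
  (s : seq ('I_r * 'I_c)) : R :=
  (\sum_(xy <- zip s (rot 1 s)) (fine (B xy.1.1 xy.1.2) - fine (A xy.2.1 xy.1.2)))%R.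

End MaxPlus.

(* Write f = A^# B. If a positional strategy sigma of Max has only nonnegative
   cycles, then every coordinate of the orbit f^k(0) dominates the weight of a
   walk in the graph of (A, B^sigma), and such weights are bounded below since
   walks can be shortcut to simple ones; hence every cycle time is nonnegative.
   Conversely, if Phi >= 0 then every coordinate of the orbit reaches every
   negative rate rho: otherwise the supremum of the reached rates would be the
   negative cycle time of some coordinate.  Reaching rho gives a subeigenvector
   x + rho <= f x, and the strategy choosing Max's best reply to x has only
   cycles of mean weight >= rho; as strategies are finitely many, one of them
   works for all rho < 0.  Finally B(lambda) is B(0) with lambda added to the
   rows outside [m], so a cycle loses N per visit of these rows at lambda = -N;
   a strategy that is good for every N must avoid them. *)

From HB Require Import structures.
From mathcomp Require Import all_boot all_order all_algebra.
From mathcomp Require Import all_classical all_reals all_analysis.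
From mathcomp Require Import ring lra.
Set Implicit Arguments. Unset Strict Implicit. Unset Printing Implicit Defensive.
Import Order.TTheory GRing.Theory Num.Theory numFieldNormedType.Exports.
Local Open Scope ring_scope.
Local Open Scope classical_set_scope.

Lemma antitone_witness (T : finType) (Q : nat -> T -> Prop) :
  (forall N, exists t, Q N t) ->
  (forall N N' t, (N' <= N)%N -> Q N t -> Q N' t) ->
  exists t, forall N, Q N t.
Proof.
move=> exQ antiQ; apply: contrapT => noQ.
have /choice [N notQN] : forall t, exists N, ~ Q N t.
  by move=> t; apply/existsNP => allQ; apply: noQ; exists t.
have [t Qt] := exQ (\max_t N t)%N.
exact/(notQN t)/(antiQ _ _ _ (leq_bigmax t) Qt).
Qed.

Lemma antitone_fun_witness (aT rT : finType) (Q : nat -> (aT -> rT) -> Prop) :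
  (forall N, exists f, Q N f) ->
  (forall N N' f, (N' <= N)%N -> Q N f -> Q N' f) ->
  exists f, forall N, Q N f.
Proof.
move=> exQ antiQ.
have [|N N' g|g Qg] := @antitone_witness {ffun aT -> rT} (fun N g => Q N g); last by exists g.
  by move=> N; have [f Qf] := exQ N; exists (finfun f); rewrite (funext (ffunE f)).
exact: antiQ.
Qed.

Section RatioLimits.
Variable R : realType.
Implicit Types (u : nat -> R) (q t C e : R).

Lemma le_of_forall_le_add_div (x y a : R) :
  (forall N : nat, x <= y + a / N.+1%:R) -> x <= y.
Proof.
move=> le_xy; apply/ler_addgt0Pr => e e_gt0.
apply: le_trans (le_xy (Num.bound `|a / e|)) _.
rewrite lerD2l ler_pdivrMr // mulrC -ler_pdivrMr //.
apply/ltW/(le_lt_trans (ler_norm _))/(lt_le_trans (archi_boundP (normr_ge0 _))).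
by rewrite ler_nat.
Qed.

Lemma near_ratio_ge u q C e : 0 < e -> (forall k, q * k%:R - C <= u k) ->
  \forall k \near \oo, q - e <= u k / k%:R.
Proof.
move=> e_gt0 u_ge; near=> k.
have k_gt0 : 0 < k%:R :> R by rewrite ltr0n; near: k; exact: nbhs_infty_gt.
have Ck : C / e < k%:R by near: k; exact: nbhs_infty_gtr.
rewrite ler_pdivlMr // mulrBl.
rewrite ltr_pdivrMr // mulrC in Ck.
by have := u_ge k; lra.
Unshelve. all: by end_near.
Qed.

(* A divergent ratio has the junk limit [0]. *)
Lemma limn_ratio_ge0 u C : (forall k, - C <= u k) -> 0 <= limn (fun k => u k / k%:R).
Proof.
move=> u_ge; have [cvg_u|/dvgP ->] := pselect (cvgn (fun k => u k / k%:R)); last by [].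
apply/ler_addgt0Pr => e e_gt0; rewrite -lerBlDr; apply: limr_ge => //.
by apply: near_ratio_ge => // k; rewrite mul0r sub0r.
Qed.

Lemma cvg_ratio u t : (forall k, (0 < k)%N -> u k <= t * k%:R) ->
  (forall q, q < t -> exists C, forall k, q * k%:R - C <= u k) ->
  (fun k => u k / k%:R) @ \oo --> t.
Proof.
move=> u_le u_ge; apply/cvgrPdist_le => e e_gt0.
have [|C u_geC] := u_ge (t - e / 2); first by rewrite ltrBlDr ltrDl divr_gt0.
have := near_ratio_ge (divr_gt0 e_gt0 (ltr0Sn _ 1)) u_geC.
apply: filterS2 (nbhs_infty_gt 0) => k k_gt0 ge_k.
have le_k : u k / k%:R <= t by rewrite ler_pdivrMr ?ltr0n // u_le.
rewrite ger0_norm ?subr_ge0 //; lra.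
Qed.

Lemma bounded_natmul_eq0 (w : R) (k : nat) : (forall N : nat, N%:R *+ k <= w) -> k = 0%N.
Proof.
move=> le_w; apply/eqP; rewrite -leqn0 leqNgt; apply/negP => k_gt0.
have := le_w (Num.bound `|w|); rewrite -mulr_natr -natrM; apply/negP; rewrite -ltNge.
apply: le_lt_trans (ler_norm w) _; apply: lt_le_trans (archi_boundP (normr_ge0 w)) _.
by rewrite ler_nat leq_pmulr.
Qed.

End RatioLimits.

Lemma split_last_mem (T U : eqType) (f : T -> U) (t : seq T) u :
  u \in map f t ->
  exists t1 t2, [/\ t = t1 ++ t2, t1 != [::], last u (map f t1) = u & u \notin map f t2].
Proof.
elim: t => [//|y t IH] /=; have [u_t _|u_t] := boolP (u \in map f t).
  have [t1 [t2 [-> t1_nil end_t1 u_t2]]] := IH u_t.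
  by exists (y :: t1), t2; case: t1 t1_nil end_t1.
by rewrite inE (negPf u_t) orbF => /eqP u_y; exists [:: y], t; rewrite /= -u_y.
Qed.

Section Walks.
Variables (R : realType) (r c : nat) (A B : 'M[\bar R]_(r, c)).

(* A step [(i, l)] from the Min node [v] follows the arcs [v -> i -> l]. *)
Fixpoint walk (v : 'I_c) (s : seq ('I_r * 'I_c)) : bool :=
  if s is x :: s' then [&& A x.1 v \is a fin_num, B x.1 x.2 \is a fin_num & walk x.2 s']
  else true.

Fixpoint walk_weight (v : 'I_c) (s : seq ('I_r * 'I_c)) : R :=
  if s is x :: s' then fine (B x.1 x.2) - fine (A x.1 v) + walk_weight x.2 s' else 0.

Definition walk_end (v : 'I_c) (s : seq ('I_r * 'I_c)) := last v (map snd s).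

Lemma walk_end_cons v y s : walk_end v (y :: s) = walk_end y.2 s.
Proof. by []. Qed.

Lemma walk_cat v s1 s2 : walk v (s1 ++ s2) = walk v s1 && walk (walk_end v s1) s2.
Proof. by elim: s1 v => [//|x s1 IH] v; rewrite /= IH !andbA. Qed.

Lemma walk_weight_cat v s1 s2 :
  walk_weight v (s1 ++ s2) = walk_weight v s1 + walk_weight (walk_end v s1) s2.
Proof. by elim: s1 v => [|x s1 IH] v /=; rewrite ?add0r // IH addrA. Qed.

Lemma all_zip_rcons_walk y s q :
  all (fun xy : ('I_r * 'I_c) * ('I_r * 'I_c) =>
         (B xy.1.1 xy.1.2 \is a fin_num) && (A xy.2.1 xy.1.2 \is a fin_num))
      (zip (y :: s) (rcons s q)) =
  [&& B y.1 y.2 \is a fin_num, walk y.2 s & A q.1 (walk_end y.2 s) \is a fin_num].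
Proof.
elim: s y => [|z s IH] y /=; first by rewrite !andbT.
by rewrite IH /walk_end /= !andbA.
Qed.

Lemma sum_zip_rcons_walk y s q :
  \sum_(xy <- zip (y :: s) (rcons s q)) (fine (B xy.1.1 xy.1.2) - fine (A xy.2.1 xy.1.2)) =
  fine (B y.1 y.2) + walk_weight y.2 s - fine (A q.1 (walk_end y.2 s)).
Proof.
elim: s y => [|z s IH] y /=; first by rewrite big_seq1 addr0.
by rewrite big_cons IH /walk_end /=; ring.
Qed.

Lemma game_cycle_walk y s : game_cycle A B (y :: s) = walk (walk_end y.2 s) (y :: s).
Proof.
rewrite /game_cycle rot1_cons all_zip_rcons_walk /=.
by case: (A y.1 _ \is a fin_num); rewrite ?andbF ?andbT.
Qed.

Lemma cycle_weight_walk y s :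
  cycle_weight A B (y :: s) = walk_weight (walk_end y.2 s) (y :: s).
Proof. by rewrite /cycle_weight rot1_cons sum_zip_rcons_walk /=; ring. Qed.

Lemma closed_walk_cycle v s : s != [::] -> walk v s -> walk_end v s = v ->
  game_cycle A B s /\ cycle_weight A B s = walk_weight v s.
Proof.
case: s => [//|y s] _ w_s; rewrite walk_end_cons => end_v.
by rewrite game_cycle_walk cycle_weight_walk end_v.
Qed.

Lemma walk_weight_ge_size W : (forall i l j, - W <= fine (B i l) - fine (A i j)) ->
  forall v s, - ((size s)%:R * W) <= walk_weight v s.
Proof.
move=> step_ge v s; elim: s v => [|x s IH] v /=; first by rewrite mul0r oppr0.
by have := step_ge x.1 x.2 v; have := IH x.2; rewrite -natr1 mulrDl mul1r; lra.
Qed.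

Section NonnegativeCycles.
Hypothesis cycle_ge0 : forall s, game_cycle A B s -> 0 <= cycle_weight A B s.

Lemma walk_shortcut v s : walk v s ->
  exists2 s0, walk v s0 && uniq (v :: map snd s0) & walk_weight v s0 <= walk_weight v s.
Proof.
elim: s v => [|x s IH] v /=; first by exists [::].
case/and3P=> A_xv B_x /IH [s0 /andP[w_s0 uniq_s0] le_s0].
set t := x :: s0.
have w_t : walk v t by rewrite /= A_xv B_x.
have le_t : walk_weight v t <= fine (B x.1 x.2) - fine (A x.1 v) + walk_weight x.2 s.
  by rewrite /= lerD2l.
have [v_t|v_t] := boolP (v \in map snd t); last first.
  by exists t; rewrite ?w_t //= v_t.
have [t1 [t2 [t_eq t1_nil end_t1 v_t2]]] := split_last_mem v_t.
change (walk_end v t1 = v) in end_t1.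
have uniq_t2 : uniq (map snd t2).
  by move: uniq_s0; rewrite -[x.2 :: _]/(map snd t) t_eq map_cat cat_uniq => /and3P[].
move: w_t le_t; rewrite t_eq walk_cat walk_weight_cat end_t1 => /andP[w_t1 w_t2].
have [/cycle_ge0 + <-] := closed_walk_cycle t1_nil w_t1 end_t1.
by exists t2; [rewrite w_t2 /= v_t2 | lra].
Qed.

Lemma walk_weight_bounded : exists C, forall v s, walk v s -> - C <= walk_weight v s.
Proof.
pose W := \big[Order.max/0]_(t : 'I_r * 'I_c * 'I_c) `|fine (B t.1.1 t.1.2) - fine (A t.1.1 t.2)|.
have step_ge i l j : - W <= fine (B i l) - fine (A i j).
  rewrite lerNl; apply: le_trans (ler_norm _) _.
  by rewrite normrN; exact: (le_bigmax _ _ (i, l, j)).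
exists (c%:R * W) => v s /walk_shortcut [s0 /andP[_ uniq_s0] le_s0].
have size_s0 : (size s0)%:R * W <= c%:R * W.
  rewrite ler_wpM2r ?bigmax_ge_id // ler_nat ltnW //.
  by have := max_card (mem (v :: map snd s0)); rewrite (card_uniqP uniq_s0) card_ord /= size_map.
by have := walk_weight_ge_size step_ge v s0; lra.
Qed.

End NonnegativeCycles.
End Walks.

Lemma strat_restrict_fin (R : realType) r c (B : 'M[\bar R]_(r, c)) sigma i j :
  strat_restrict B sigma i j \is a fin_num ->
  j = sigma i /\ strat_restrict B sigma i j = B i j.
Proof. by rewrite mxE; case: eqP. Qed.

Section RowShift.
Variables (R : realType) (r c : nat) (A : 'M[\bar R]_(r, c)) (w : 'I_r -> R).

Definition row_shift (B : 'M[\bar R]_(r, c)) := \matrix_(i, j) (B i j + (w i)%:E).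

Lemma strat_restrict_row_shift B sigma :
  strat_restrict (row_shift B) sigma = row_shift (strat_restrict B sigma).
Proof. by apply/matrixP => i j; rewrite !mxE; case: eqP. Qed.

Lemma walk_row_shift B v s : walk A (row_shift B) v s = walk A B v s.
Proof. by elim: s v => [//|x s IH] v; rewrite /= IH mxE fin_numD andbT. Qed.

Lemma walk_weight_row_shift B v s : walk A B v s ->
  walk_weight A (row_shift B) v s = walk_weight A B v s + \sum_(x <- s) w x.1.
Proof.
elim: s v => [|x s IH] v /=; first by rewrite big_nil addr0.
by case/and3P=> _ B_x /IH ->; rewrite big_cons mxE fineD //=; ring.
Qed.

Lemma game_cycle_row_shift B s : game_cycle A (row_shift B) s = game_cycle A B s.
Proof. by case: s => [//|y s]; rewrite !game_cycle_walk walk_row_shift. Qed.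

Lemma cycle_weight_row_shift B s : game_cycle A B s ->
  cycle_weight A (row_shift B) s = cycle_weight A B s + \sum_(x <- s) w x.1.
Proof.
case: s => [//|y s]; rewrite game_cycle_walk !cycle_weight_walk.
exact: walk_weight_row_shift.
Qed.

End RowShift.

Lemma arc_valueE (R : realType) (a b : \bar R) (y : R) :
  a \is a fin_num -> b \is a fin_num -> (- a + (b + y%:E))%E = (fine b - fine a + y)%:E.
Proof. by move=> a_fin b_fin; rewrite EFinD EFinB !fineK // addeA (addeC (- a)%E). Qed.

Section ShapleyOperator.
Variables (R : realType) (r c : nat) (A B : 'M[\bar R]_(r, c)).
Hypothesis A_col : forall j, exists k, A k j \is a fin_num.
Hypothesis B_row : forall k, exists l, B k l \is a fin_num.

Local Notation f := (sharp A B).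

Definition orbit k := iter k f (fun _ => 0).

Definition row_value (x : 'I_c -> R) k :=
  (\big[Order.max/-oo]_(l < c | B k l \is a fin_num) (B k l + (x l)%:E))%E.

Lemma row_valueE x k : exists2 l, B k l \is a fin_num & row_value x k = (B k l + (x l)%:E)%E.
Proof.
have [l B_l] := B_row k; rewrite /row_value.
have [l0 B_l0 ->] := @eq_bigmax _ _ _ -oo%E l (fun l => B k l \is a fin_num)
  (fun l => B k l + (x l)%:E)%E B_l (fun _ _ => leNye _).
by exists l0.
Qed.

Lemma le_row_value x k l : B k l \is a fin_num -> (B k l + (x l)%:E <= row_value x k)%E.
Proof. exact: (le_bigmax_cond _ (fun l => B k l + (x l)%:E)%E). Qed.

Lemma sharpE x j : exists2 k, A k j \is a fin_num &
  f x j = fine (- A k j + row_value x k)%E /\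
  forall k', A k' j \is a fin_num -> (- A k j + row_value x k <= - A k' j + row_value x k')%E.
Proof.
have [k A_k] := A_col j; rewrite /sharp.
have [k0 A_k0 minE] := @eq_bigmin _ _ _ +oo%E k (fun k => A k j \is a fin_num)
  (fun k => - A k j + row_value x k)%E A_k (fun _ _ => leey _).
by exists k0 => //; split => [|k' A_k']; rewrite -?minE //; apply: bigmin_le_cond.
Qed.

Lemma sharp_ub x j k : A k j \is a fin_num ->
  exists2 l, B k l \is a fin_num & f x j <= fine (B k l) - fine (A k j) + x l.
Proof.
move=> A_k; have [k0 A_k0 [-> /(_ k A_k)]] := sharpE x j.
have [l B_l ->] := row_valueE x k; have [l0 B_l0 ->] := row_valueE x k0.
by rewrite !arc_valueE // lee_fin => le_l; exists l.
Qed.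

Lemma sharp_lb x j : exists2 k, A k j \is a fin_num &
  forall l, B k l \is a fin_num -> fine (B k l) - fine (A k j) + x l <= f x j.
Proof.
have [k A_k [-> _]] := sharpE x j; exists k => // l B_l.
have := le_row_value x B_l; have [l0 B_l0 ->] := row_valueE x k.
rewrite arc_valueE // -(fineK B_l) -(fineK B_l0) -!EFinD lee_fin /=; lra.
Qed.

Lemma sharp_mono x y : (forall l, x l <= y l) -> forall j, f x j <= f y j.
Proof.
move=> le_xy j; have [k A_k le_k] := sharp_lb y j; have [l B_l le_l] := sharp_ub x A_k.
by apply: le_trans le_l _; apply: le_trans (le_k l B_l); rewrite lerD2l.
Qed.

Lemma sharp_shift x a j : f (fun l => x l + a) j = f x j + a.
Proof.
apply/eqP; rewrite eq_le; apply/andP; split.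
- have [k A_k le_k] := sharp_lb x j; have [l B_l le_l] := sharp_ub (fun l => x l + a) A_k.
  by have := le_k l B_l; lra.
- have [k A_k le_k] := sharp_lb (fun l => x l + a) j; have [l B_l le_l] := sharp_ub x A_k.
  by have := le_k l B_l; lra.
Qed.

Definition reaches rho := forall v, exists2 k, (0 < k)%N & rho * k%:R <= orbit k v.

Lemma reaches_le rho rho' : rho' <= rho -> reaches rho -> reaches rho'.
Proof.
move=> le_rho reach_rho v; have [k k_gt0 le_k] := reach_rho v.
by exists k => //; apply: le_trans le_k; rewrite ler_wpM2r.
Qed.

(* The witness is the running maximum of [orbit k - rho * k] over a horizon
   at which every coordinate has reached [rho]. *)
Lemma subeigen_of_reaches rho : reaches rho -> exists x, forall v, x v + rho <= f x v.
Proof.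
move=> reach_rho.
have /choice [K K_reach] : forall v, exists k, (0 < k)%N /\ rho * k%:R <= orbit k v.
  by move=> v; have [k] := reach_rho v; exists k.
pose N := (\max_v K v)%N.
pose x v := \big[Order.max/0]_(k < N.+1) (orbit k v - rho * k%:R).
have le_x k v : (k <= N)%N -> orbit k v - rho * k%:R <= x v.
  by move=> le_kN; exact: (le_bigmax _ _ (Ordinal (le_kN : k < N.+1)%N)).
have step k v : (k <= N)%N -> orbit k.+1 v - rho * k.+1%:R <= f x v - rho.
  move=> le_kN; have := sharp_mono (fun l => le_x k l le_kN) v.
  by rewrite sharp_shift -natr1 mulrDr mulr1 /=; lra.
exists x => v; suff: x v <= f x v - rho by lra.
have f_ge : 0 <= f x v - rho.
  have [K_gt0 le_K] := K_reach v; have le_KN : (K v <= N)%N by exact: leq_bigmax.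
  case: (K v) K_gt0 le_K le_KN => [//|k] _ le_k /ltnW /(step k v); lra.
rewrite {1}/x; apply: bigmax_le => // -[[|k] lt_kN] _ /=; first by rewrite mulr0 subr0.
exact: step k v (ltnW lt_kN).
Qed.

Lemma orbit_ge_of_subeigen rho x : (forall v, x v + rho <= f x v) ->
  exists C, forall k v, rho * k%:R - C <= orbit k v.
Proof.
move=> sub_x; pose M := \big[Order.max/0]_v `|x v|.
have [x_le x_ge] : (forall v, x v <= M) /\ (forall v, - M <= x v).
  by split=> v; have := le_bigmax 0 (fun v => `|x v|) v; rewrite ler_norml => /andP[].
suff orbit_ge k v : x v + rho * k%:R - M <= orbit k v.
  by exists (M + M) => k v; have := orbit_ge k v; have := x_ge v; lra.
elim: k v => [|k IH] v /=; first by have := x_le v; rewrite mulr0; lra.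
have := sharp_mono (fun l => IH l) v; rewrite /orbit /= !sharp_shift.
by have := sub_x v; rewrite -natr1 mulrDr mulr1; lra.
Qed.

Lemma strategy_of_subeigen rho x : (forall v, x v + rho <= f x v) ->
  exists2 sigma, (forall i, B i (sigma i) \is a fin_num) &
    forall s, game_cycle A (strat_restrict B sigma) s ->
      rho * (size s)%:R <= cycle_weight A (strat_restrict B sigma) s.
Proof.
move=> sub_x.
have /choice [sigma sigma_max] : forall i, exists l, B i l \is a fin_num /\
    forall l', B i l' \is a fin_num -> fine (B i l') + x l' <= fine (B i l) + x l.
  move=> i; have [l0 B_l0] := B_row i.
  case: (@arg_maxP _ _ _ l0 (fun l => B i l \is a fin_num) (fun l => fine (B i l) + x l) B_l0).
  by move=> l; exists l.
exists sigma => [i|]; first by case: (sigma_max i).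
set Bs := strat_restrict B sigma.
have walk_ge v s : walk A Bs v s ->
    x v + rho * (size s)%:R <= walk_weight A Bs v s + x (walk_end v s).
  elim: s v => [|[i l] s IH] v /=; first by rewrite mulr0 add0r addr0.
  case/and3P=> A_i /strat_restrict_fin[-> ->] /IH; rewrite walk_end_cons.
  have [l' B_l' le_l'] := sharp_ub x A_i; have := (sigma_max i).2 l' B_l'.
  by have := sub_x v; rewrite -natr1 mulrDr mulr1; lra.
case=> [//|y s]; rewrite game_cycle_walk cycle_weight_walk => /walk_ge.
by rewrite walk_end_cons; lra.
Qed.

Lemma orbit_ge_walk sigma : (forall i, B i (sigma i) \is a fin_num) ->
  forall k v, exists2 s, walk A (strat_restrict B sigma) v s &
    walk_weight A (strat_restrict B sigma) v s <= orbit k v.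
Proof.
move=> sigma_fin; elim=> [|k IH] v; first by exists [::].
have [i A_i le_i] := sharp_lb (orbit k) v; have [s w_s le_s] := IH (sigma i).
exists ((i, sigma i) :: s); rewrite /= mxE eqxx ?A_i ?sigma_fin //.
by have := le_i _ (sigma_fin i); rewrite /orbit /= in le_s *; lra.
Qed.

Lemma Phi_ge0_of_strategy sigma : (forall i, B i (sigma i) \is a fin_num) ->
  (forall s, game_cycle A (strat_restrict B sigma) s ->
     0 <= cycle_weight A (strat_restrict B sigma) s) ->
  (0 <= Phi A B)%E.
Proof.
move=> sigma_fin /walk_weight_bounded [C C_le].
apply: le_bigmin => [|j _]; first exact: leey.
rewrite lee_fin; apply: (@limn_ratio_ge0 _ (orbit^~ j) C) => k.
by have [s /C_le] := orbit_ge_walk sigma_fin k j; apply: le_trans.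
Qed.

Lemma orbit_le_of_not_reaches tau : (forall q, tau < q -> ~ reaches q) ->
  exists v, forall k, (0 < k)%N -> orbit k v <= tau * k%:R.
Proof.
move=> not_reach.
have [|N N' v le_NN' le_v|v le_v] := @antitone_witness _
    (fun N v => forall k, (0 < k)%N -> orbit k v <= (tau + N.+1%:R^-1) * k%:R).
- move=> N; have := not_reach (tau + N.+1%:R^-1).
  rewrite ltrDl invr_gt0 ltr0n => /(_ isT) /existsNP[v not_v].
  exists v => k k_gt0; rewrite leNgt; apply/negP => /ltW le_k.
  by apply: not_v; exists k.
- move=> k k_gt0; apply: le_trans (le_v k k_gt0) _.
  by rewrite ler_wpM2r // lerD2l lef_pV2 ?posrE // ler_nat.
- exists v => k k_gt0; apply: (le_of_forall_le_add_div (a := k%:R)) => N.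
  by have := le_v N k k_gt0; rewrite mulrDl [_^-1 * _]mulrC.
Qed.

(* The supremum [tau] of the rates reached by the orbit is the cycle time of
   some coordinate. *)
Lemma Phi_lt0_of_not_reaches rho : rho < 0 -> ~ reaches rho -> (Phi A B < 0)%E.
Proof.
move=> rho_lt0 not_reach_rho.
pose S := [set q | reaches q]; pose tau := sup S.
have S_le_rho q : S q -> q <= rho.
  by move=> reach_q; rewrite leNgt; apply/negP => /ltW/reaches_le/(_ reach_q).
have S_sup : has_sup S.
  split; last by exists rho => q /S_le_rho.
  exists (- \sum_v `|orbit 1 v|) => v; exists 1%N => //; rewrite mulr1 lerNl.
  apply: le_trans (ler_norm _) _; rewrite normrN.
  by rewrite (bigD1 v) //= lerDl sumr_ge0.
have tau_le : tau <= rho by apply: ge_sup => [|q /S_le_rho]; first exact: S_sup.1.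
have [v le_v] : exists v, forall k, (0 < k)%N -> orbit k v <= tau * k%:R.
  apply: orbit_le_of_not_reaches => q tau_q reach_q.
  by have := sup_upper_bound S_sup reach_q; rewrite -/tau; lra.
have ge_v q : q < tau -> exists C, forall k, q * k%:R - C <= orbit k v.
  rewrite -subr_gt0 => /sup_adherent/(_ S_sup)[q' S_q' lt_q'].
  have [x /orbit_ge_of_subeigen [C ge_C]] : exists x, forall v, x v + q <= f x v.
    by apply/subeigen_of_reaches/(reaches_le _ S_q'); rewrite -/tau in lt_q'; lra.
  by exists C => k.
have cycle_v : cycle_time A B v = tau by apply: cvg_lim => //; exact: (@cvg_ratio _ (orbit^~ v)).
apply: (@le_lt_trans _ _ (cycle_time A B v)%:E); first exact: bigmin_le.
by rewrite cycle_v lte_fin; lra.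
Qed.

Theorem Phi_ge0P : (0 <= Phi A B)%E <->
  exists2 sigma, (forall i, B i (sigma i) \is a fin_num) &
    forall s, game_cycle A (strat_restrict B sigma) s ->
      0 <= cycle_weight A (strat_restrict B sigma) s.
Proof.
split=> [Phi_ge0|[sigma]]; last exact: Phi_ge0_of_strategy.
pose Q N sigma := (forall i, B i (sigma i) \is a fin_num) /\
  forall s, game_cycle A (strat_restrict B sigma) s ->
    - (N.+1%:R^-1 * (size s)%:R) <= cycle_weight A (strat_restrict B sigma) s.
have [N|N N' sigma le_NN' [sigma_fin ge_sigma]|sigma Q_sigma] := @antitone_fun_witness _ _ Q.
- have reach : reaches (- N.+1%:R^-1).
    apply: contrapT => /(Phi_lt0_of_not_reaches _); rewrite oppr_lt0 invr_gt0 ltr0n.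
    by move=> /(_ isT); rewrite ltNge Phi_ge0.
  have [x /strategy_of_subeigen [sigma sigma_fin ge_sigma]] := subeigen_of_reaches reach.
  by exists sigma; split=> // s /ge_sigma; rewrite mulNr.
- split=> // s /ge_sigma; apply: le_trans; rewrite lerN2 ler_wpM2r //.
  by rewrite lef_pV2 ?posrE // ler_nat.
- exists sigma => [|s cyc_s]; first exact: (Q_sigma 0%N).1.
  apply: (le_of_forall_le_add_div (a := (size s)%:R)) => N.
  by have := (Q_sigma N).2 s cyc_s; rewrite mulrC -subr_ge0 opprK.
Qed.

End ShapleyOperator.

Section UnboundedProblem.
Variables (R : realType) (m n : nat) (V : 'M[\bar R]_(m, n)) (d : 'cV[\bar R]_m).
Variable A : 'M[\bar R]_(m + n + 1, n + 1).

Definition lower_rows (lam : R) (i : 'I_(m + n + 1)) := if (m <= i)%N then lam else 0.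

Lemma matB_row_shift lam : matB V d lam = row_shift (lower_rows lam) (matB V d 0).
Proof.
apply/matrixP => i j; rewrite /lower_rows !mxE.
case: (split_ordP i) => [i' ->|i' ->]; rewrite ?col_mxEu ?col_mxEd /=.
  case: (split_ordP i') => [k ->|k ->]; rewrite ?col_mxEu ?col_mxEd /=.
    by rewrite leqNgt ltn_ord adde0.
  rewrite leq_addr; case: (split_ordP j) => [j' ->|j' ->]; rewrite ?row_mxEl ?row_mxEr !mxE //.
  by case: eqP => _; rewrite ?add0e.
rewrite (leq_trans (leq_addr n m) (leq_addr _ _)).
by case: (split_ordP j) => [j' ->|j' ->]; rewrite ?row_mxEl ?row_mxEr !mxE ?add0e.
Qed.

Lemma matB_fin_num lam i j : (matB V d lam i j \is a fin_num) = (matB V d 0 i j \is a fin_num).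
Proof. by rewrite matB_row_shift mxE fin_numD andbT. Qed.

Lemma game_cycle_matB lam sigma s :
  game_cycle A (strat_restrict (matB V d lam) sigma) s =
  game_cycle A (strat_restrict (matB V d 0) sigma) s.
Proof. by rewrite matB_row_shift strat_restrict_row_shift game_cycle_row_shift. Qed.

Lemma cycle_weight_matB lam sigma s :
  game_cycle A (strat_restrict (matB V d 0) sigma) s ->
  cycle_weight A (strat_restrict (matB V d lam) sigma) s =
  cycle_weight A (strat_restrict (matB V d 0) sigma) s +
    lam *+ count (fun x : 'I_(m + n + 1) * 'I_(n + 1) => (m <= x.1)%N) s.
Proof.
move=> cyc_s; rewrite matB_row_shift strat_restrict_row_shift cycle_weight_row_shift //.
by rewrite /lower_rows -big_mkcond /= big_const_seq iter_addr_0.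
Qed.

Lemma matB0_fin_num (hV : forall i j, V i j != +oo%E) (hd : forall i, d i ord0 != +oo%E) i j :
  matB V d 0 i j != -oo%E -> matB V d 0 i j \is a fin_num.
Proof.
rewrite fin_numE => -> /=; rewrite /matB.
case: (split_ordP i) => [i' ->|i' ->]; rewrite ?col_mxEu ?col_mxEd; last first.
  by case: (split_ordP j) => [j' ->|j' ->]; rewrite ?row_mxEl ?row_mxEr !mxE.
case: (split_ordP i') => [k ->|k ->]; rewrite ?col_mxEu ?col_mxEd;
  case: (split_ordP j) => [j' ->|j' ->]; rewrite ?row_mxEl ?row_mxEr ?mxE ?(ord1 j') //.
by case: ifP.
Qed.

Lemma all_upper_rowsE s :
  all (fun x : 'I_(m + n + 1) * 'I_(n + 1) => (x.1 < m)%N) s =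
  (count (fun x : 'I_(m + n + 1) * 'I_(n + 1) => (m <= x.1)%N) s == 0%N).
Proof. by rewrite eqn0Ngt -has_count -all_predC; apply: eq_all => x; rewrite /= ltnNge. Qed.

End UnboundedProblem.

Local Open Scope ereal_scope.

Theorem proposition8 (R : realType) (m n : nat)
  (U V : 'M[\bar R]_(m, n)) (b d : 'cV[\bar R]_m)
  (p : 'cV[\bar R]_n) (q : 'rV[\bar R]_n)
  (hU : forall i j, U i j != +oo) (hV : forall i j, V i j != +oo)
  (hb : forall i, b i ord0 != +oo) (hd : forall i, d i ord0 != +oo)
  (hp : forall i, p i ord0 != +oo) (hq : forall j, q ord0 j != -oo)
  (hA : forall j, exists i, matA U b p q i j \is a fin_num)
  (hB : forall lam : R, forall i, exists l, matB V d lam i l \is a fin_num) :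
  (forall lam : R, 0 <= Phi (matA U b p q) (matB V d lam)) <->
  exists sigma : 'I_(m + n + 1) -> 'I_(n + 1),
    is_strategy (matB V d 0%R) sigma /\
    forall s : seq ('I_(m + n + 1) * 'I_(n + 1)),
      game_cycle (matA U b p q) (strat_restrict (matB V d 0%R) sigma) s ->
      all (fun x : 'I_(m + n + 1) * 'I_(n + 1) => (x.1 < m)%N) s /\
      (0 <= cycle_weight (matA U b p q) (strat_restrict (matB V d 0%R) sigma) s)%R.
Proof.
split=> [Phi_ge0|[sigma [sigma_strat cyc_ge0]] lam]; last first.
  apply/(Phi_ge0P hA (hB lam)); exists sigma => [i|s].
    by rewrite matB_fin_num matB0_fin_num.
  rewrite game_cycle_matB => cyc_s; have [] := cyc_ge0 s cyc_s.
  by rewrite (cycle_weight_matB lam) // all_upper_rowsE => /eqP ->; rewrite addr0.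
set A := matA U b p q; set B0 := matB V d 0%R.
pose Q N sigma := (forall i, B0 i (sigma i) \is a fin_num) /\
  forall s, game_cycle A (strat_restrict B0 sigma) s ->
    (N%:R *+ count (fun x : 'I_(m + n + 1) * 'I_(n + 1) => (m <= x.1)%N) s
       <= cycle_weight A (strat_restrict B0 sigma) s)%R.
have [N|N N' sigma le_NN' [sigma_fin ge_sigma]|sigma Q_sigma] := @antitone_fun_witness _ _ Q.
- have [sigma sigma_fin ge_sigma] := (Phi_ge0P hA (hB _)).1 (Phi_ge0 (- N%:R)%R).
  exists sigma; split=> [i|s cyc_s]; first by rewrite -(matB_fin_num _ _ (- N%:R)%R).
  have := ge_sigma s; rewrite game_cycle_matB (cycle_weight_matB (- N%:R)%R) //.
  by rewrite mulNrn subr_ge0; apply.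
- split=> // s /ge_sigma; apply: le_trans; by apply: ler_wMn2r; rewrite ler_nat.
- exists sigma; split=> [i|s cyc_s].
    by have [/(_ i)] := Q_sigma 0%N; rewrite fin_numE => /andP[].
  have cnt0 := bounded_natmul_eq0 (fun N => (Q_sigma N).2 s cyc_s).
  by rewrite all_upper_rowsE cnt0; have := (Q_sigma 0%N).2 s cyc_s; rewrite cnt0.
Qed.
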